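(* Let $Y$ be a real symmetric log-concave random variable, $p\geq 2$ and $V>0$ with $\|Y\|_p\geq V$. Then $\mathbb{E}(|Y|\wedge V)^p\geq (V/12)^p$.
   Context: $\|Y\|_p:=(\mathbb{E}|Y|^p)^{1/p}$; $a\wedge b=\min\{a,b\}$. A real random variable is log-concave if its law $\mu$ satisfies $\mu(\lambda K+(1-\lambda)L)\geq\mu(K)^\lambda\mu(L)^{1-\lambda}$ for all nonempty compact $K,L\subset\mathbb{R}$ and $\lambda\in[0,1]$; symmetric means $Y$ and $-Y$ have the same law. *)

From Stdlib Require Import Reals Lra Rtopology.
Open Scope R_scope.

Definition sigma_algebra (S : (R -> Prop) -> Prop) : Prop :=
  S (fun _ => True) /\
  (forall A, S A -> S (fun x => ~ A x)) /\
  (forall A : nat -> R -> Prop, (forall n, S (A n)) -> S (fun x => exists n, A n x)).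

Definition borel (A : R -> Prop) : Prop :=
  forall S, sigma_algebra S -> (forall a b, S (fun x => a < x < b)) -> S A.

(* A Borel probability measure on R (the law of a real random variable). *)
Definition is_prob_measure (mu : (R -> Prop) -> R) : Prop :=
  (forall A, borel A -> 0 <= mu A) /\
  mu (fun _ => True) = 1 /\
  (forall A : nat -> R -> Prop,
     (forall n, borel (A n)) ->
     (forall n m x, n <> m -> A n x -> A m x -> False) ->
     infinite_sum (fun n => mu (A n)) (mu (fun x => exists n, A n x))).

Definition rpow (a lam : R) : R :=
  if Rlt_dec 0 a then Rpower a lam else if Req_EM_T lam 0 then 1 else 0.

Definition powp (x p : R) : R :=
  if Rlt_dec 0 x then Rpower x p else 0.

Definition mink (lam : R) (K L : R -> Prop) : R -> Prop :=
  fun z => exists x y, K x /\ L y /\ z = lam * x + (1 - lam) * y.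

Definition log_concave (mu : (R -> Prop) -> R) : Prop :=
  forall (K L : R -> Prop) (lam : R),
    compact K -> compact L -> (exists x, K x) -> (exists y, L y) ->
    0 <= lam <= 1 ->
    mu (mink lam K L) >= rpow (mu K) lam * rpow (mu L) (1 - lam).

Definition symmetric (mu : (R -> Prop) -> R) : Prop :=
  forall A, borel A -> mu (fun x => A (- x)) = mu A.

(* For a nonnegative (Borel) function g, "E g(Y) >= c" where Y ~ mu,
   with E g(Y) computed by the layer-cake formula
   E g(Y) = \int_0^\infty mu{g > t} dt  (possibly +infinity),
   i.e. the supremum over T of the Riemann integrals over [0,T]
   (the integrand is monotone, hence Riemann integrable). *)
Definition expect_ge (mu : (R -> Prop) -> R) (g : R -> R) (c : R) : Prop :=
  forall c', c' < c ->
    exists (T : R) (pr : Riemann_integrable (fun t => mu (fun y => t < g y)) 0 T),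
      0 <= T /\ c' < RiemannInt pr.

From Stdlib Require Import Reals Rtopology RList.
From Stdlib Require Import Lra Lia Classical ClassicalEpsilon FunctionalExtensionality PropExtensionality.
Open Scope R_scope.

(* Write H(c) = mu [c, +oo).  Log-concavity applied to [0, M] and [2x, M] with weight 1/2
   gives H(0) H(2x) <= H(x)^2, and H(0) >= 1/2 by symmetry, so H(2x) <= 2 H(x)^2 and
   P(|Y| >= 2^k s) <= (2 H(s))^(k+1).  Take s = V/2.  If H(s) 6^p >= 1, then
   E min(|Y|, V)^p >= H(s) s^p >= (V/12)^p.  Otherwise 2 H(s) 2^p <= 1/2, and cutting the
   layer-cake integral of |Y|^p at the levels (2^k s)^p bounds E|Y|^p by 2 s^p < V^p. *)

Lemma set_ext (A B : R -> Prop) : (forall x, A x <-> B x) -> A = B.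
Proof.
  intros H. apply functional_extensionality. intros x.
  apply propositional_extensionality. apply H.
Qed.

Definition pair_seq (A B : R -> Prop) (n : nat) : R -> Prop :=
  match n with 0 => A | 1 => B | _ => fun _ => False end.

Lemma pair_seq_union (A B : R -> Prop) :
  (fun x => exists n, pair_seq A B n x) = (fun x => A x \/ B x).
Proof.
  apply set_ext. intros x. split.
  - intros [[|[|n]] H]; simpl in H; tauto.
  - intros [H|H]; [exists 0%nat|exists 1%nat]; exact H.
Qed.

Lemma nat_big (x : R) : {n : nat | x < INR n}.
Proof.
  apply constructive_indefinite_description.
  destruct (INR_unbounded x) as [n Hn]. exists n. lra.
Qed.

Lemma floor_ex (m : nat) (x : R) : 0 <= x < INR m -> exists k : nat, INR k <= x < INR k + 1.
Proof.
  revert x. induction m as [|m IH]; intros x Hx.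
  - simpl in Hx. lra.
  - rewrite S_INR in Hx. destruct (Rlt_le_dec x (INR m)).
    + apply IH. lra.
    + exists m. lra.
Qed.

Lemma INR_le_pow2 (n : nat) : INR n <= 2 ^ n.
Proof.
  induction n as [|n IH]; [simpl; lra|]. rewrite S_INR. simpl.
  assert (1 <= 2 ^ n) by (apply pow_R1_Rle; lra). lra.
Qed.

Lemma borel_full : borel (fun _ => True).
Proof. intros S [H _] _. exact H. Qed.

Lemma borel_compl (A : R -> Prop) : borel A -> borel (fun x => ~ A x).
Proof. intros HA S HS Hi. pose proof HS as [_ [Hc _]]. apply Hc, HA; auto. Qed.

Lemma borel_countable_union (A : nat -> R -> Prop) :
  (forall n, borel (A n)) -> borel (fun x => exists n, A n x).
Proof. intros HA S HS Hi. pose proof HS as [_ [_ Hu]]. apply Hu. intros n. apply HA; auto. Qed.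

Lemma borel_ext (A B : R -> Prop) : borel A -> (forall x, A x <-> B x) -> borel B.
Proof. intros HA H. rewrite <- (@set_ext A B H). exact HA. Qed.

Lemma borel_empty : borel (fun _ => False).
Proof. apply borel_ext with (fun _ => ~ True); [apply borel_compl, borel_full|tauto]. Qed.

Lemma borel_pair_seq (A B : R -> Prop) :
  borel A -> borel B -> forall n, borel (pair_seq A B n).
Proof. intros HA HB [|[|n]]; simpl; auto using borel_empty. Qed.

Lemma borel_union (A B : R -> Prop) : borel A -> borel B -> borel (fun x => A x \/ B x).
Proof.
  intros HA HB. rewrite <- pair_seq_union.
  apply borel_countable_union, borel_pair_seq; assumption.
Qed.

Lemma borel_inter (A B : R -> Prop) : borel A -> borel B -> borel (fun x => A x /\ B x).
Proof.
  intros HA HB. apply borel_ext with (fun x => ~ (~ A x \/ ~ B x)).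
  - apply borel_compl, borel_union; apply borel_compl; assumption.
  - intros x. split; [|tauto]. intros H. split; apply NNPP; tauto.
Qed.

Lemma borel_open_interval (a b : R) : borel (fun x => a < x < b).
Proof. intros S _ Hi. apply Hi. Qed.

Lemma borel_gt (a : R) : borel (fun x => a < x).
Proof.
  apply borel_ext with (fun x => exists n : nat, a < x < a + INR n + 1).
  - apply borel_countable_union. intros n. apply borel_open_interval.
  - intros x. split; [intros [n Hn]; lra|].
    intros H. destruct (nat_big (x - a)) as [n Hn]. exists n. lra.
Qed.

Lemma borel_lt (b : R) : borel (fun x => x < b).
Proof.
  apply borel_ext with (fun x => exists n : nat, b - INR n - 1 < x < b).
  - apply borel_countable_union. intros n. apply borel_open_interval.
  - intros x. split; [intros [n Hn]; lra|].
    intros H. destruct (nat_big (b - x)) as [n Hn]. exists n. lra.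
Qed.

Lemma borel_ge (a : R) : borel (fun x => a <= x).
Proof. apply borel_ext with (fun x => ~ x < a); [apply borel_compl, borel_lt|intros x; lra]. Qed.

Lemma borel_le (b : R) : borel (fun x => x <= b).
Proof. apply borel_ext with (fun x => ~ b < x); [apply borel_compl, borel_gt|intros x; lra]. Qed.

Lemma borel_closed_interval (a b : R) : borel (fun x => a <= x <= b).
Proof. apply borel_inter; [apply borel_ge|apply borel_le]. Qed.

Section UpwardClosed.
Variable P : R -> Prop.
Hypothesis P_up : forall u u', 0 <= u <= u' -> P u -> P u'.

Lemma upclosed_threshold (x0 c0 : R) : 0 <= x0 -> P x0 -> 0 <= c0 -> ~ P c0 ->
  exists r, 0 <= r /\ (forall u, r < u -> P u) /\ (forall u, 0 <= u < r -> ~ P u).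
Proof.
  intros Hx0 Px0 Hc0 Pc0.
  destruct (completeness (fun c => 0 <= c /\ ~ P c)) as [r [Hub Hlub]].
  { exists x0. intros c [Hc Pc]. apply Rnot_lt_le. intros Hlt. apply Pc, (P_up x0 c); [lra|exact Px0]. }
  { exists c0. auto. }
  assert (Hr : 0 <= r) by (apply Rle_trans with c0; auto).
  exists r. split; [exact Hr|split].
  - intros u Hru. apply NNPP. intros Pu.
    assert (u <= r) by (apply Hub; split; [lra|exact Pu]). lra.
  - intros u Hu Pu. assert (r <= u); [|lra]. apply Hlub. intros c [Hc Pc].
    apply Rnot_lt_le. intros Hlt. apply Pc, (P_up u c); [lra|exact Pu].
Qed.

Lemma borel_abs_upclosed : borel (fun y => P (Rabs y)).
Proof.
  destruct (classic (exists x0, 0 <= x0 /\ P x0)) as [[x0 [Hx0 Px0]] | Hnone].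
  2:{ apply borel_ext with (fun _ => False); [apply borel_empty|].
      intros y. split; [tauto|]. intros H. apply Hnone. exists (Rabs y). auto using Rabs_pos. }
  destruct (classic (exists c, 0 <= c /\ ~ P c)) as [[c0 [Hc0 Pc0]] | Hall].
  2:{ apply borel_ext with (fun _ => True); [apply borel_full|].
      intros y. split; [|tauto]. intros _. apply NNPP. intros H. apply Hall.
      exists (Rabs y). auto using Rabs_pos. }
  destruct (upclosed_threshold _ _ Hx0 Px0 Hc0 Pc0) as [r [Hr [Habove Hbelow]]].
  assert (Hcase : forall y, P (Rabs y) <-> r < Rabs y \/ (Rabs y = r /\ P r)).
  { intros y. pose proof (Rabs_pos y) as Hy. split.
    - intros HP. destruct (Rtotal_order (Rabs y) r) as [Hl|[He|Hl]]; auto.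
      + exfalso. apply (Hbelow (Rabs y)); auto.
      + right. rewrite <- He. auto.
    - intros [Hl|[He Pr]]; [auto|]. rewrite He. exact Pr. }
  destruct (classic (P r)) as [Pr|Pr].
  - apply borel_ext with (fun y => r <= y \/ y <= - r).
    + apply borel_union; [apply borel_ge|apply borel_le].
    + intros y. rewrite Hcase.
      assert (r <= Rabs y <-> r < Rabs y \/ Rabs y = r) by (split; intros; lra).
      assert (r <= Rabs y <-> r <= y \/ y <= - r)
        by (unfold Rabs; destruct Rcase_abs; split; intros; lra).
      tauto.
  - apply borel_ext with (fun y => r < y \/ y < - r).
    + apply borel_union; [apply borel_gt|apply borel_lt].
    + intros y. rewrite Hcase.
      assert (r < Rabs y <-> r < y \/ y < - r)
        by (unfold Rabs; destruct Rcase_abs; split; intros; lra).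
      tauto.
Qed.

End UpwardClosed.

Lemma borel_abs_level (G : R -> R) (t : R) :
  (forall u u', 0 <= u <= u' -> G u <= G u') -> borel (fun y => t < G (Rabs y)).
Proof.
  intros HG. apply (borel_abs_upclosed (fun u => t < G u)).
  intros u u' Hu Ht. apply Rlt_le_trans with (G u); [exact Ht|apply HG, Hu].
Qed.

Lemma infinite_sum_const_eq0 (m : R) : infinite_sum (fun _ => m) m -> m = 0.
Proof.
  intros H. destruct (Req_dec m 0) as [|Hne]; auto. exfalso.
  assert (Hp : 0 < Rabs m) by (apply Rabs_pos_lt; auto).
  destruct (H (Rabs m) Hp) as [N HN].
  specialize (HN (S N) (Nat.le_succ_diag_r N)). unfold R_dist in HN.
  rewrite sum_cte in HN.
  replace (m * INR (S (S N)) - m) with (m * INR (S N)) in HN by (rewrite !S_INR; ring).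
  rewrite Rabs_mult, (Rabs_pos_eq (INR (S N))) in HN by apply pos_INR.
  rewrite S_INR in HN. pose proof (pos_INR N). nra.
Qed.

Section ProbabilityMeasure.
Variable mu : (R -> Prop) -> R.
Hypothesis mu_prob : is_prob_measure mu.

Lemma mu_ge0 (A : R -> Prop) : borel A -> 0 <= mu A.
Proof. destruct mu_prob as [H _]. apply H. Qed.

Lemma mu_full : mu (fun _ => True) = 1.
Proof. destruct mu_prob as [_ [H _]]. exact H. Qed.

Lemma mu_empty : mu (fun _ => False) = 0.
Proof.
  destruct mu_prob as [_ [_ Hadd]].
  specialize (Hadd (fun _ _ => False) (fun _ => borel_empty) (fun _ _ _ _ H _ => H)).
  simpl in Hadd.
  assert (E : (fun x : R => exists _ : nat, False) = (fun _ => False)).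
  { apply set_ext. intros x. split; [intros [_ []]|tauto]. }
  rewrite E in Hadd. apply infinite_sum_const_eq0. exact Hadd.
Qed.

Lemma mu_union_disjoint (A B : R -> Prop) : borel A -> borel B ->
  (forall x, A x -> B x -> False) -> mu (fun x => A x \/ B x) = mu A + mu B.
Proof.
  intros HA HB Hd. destruct mu_prob as [_ [_ Hadd]].
  assert (Hdisj : forall n k x, n <> k -> pair_seq A B n x -> pair_seq A B k x -> False).
  { intros [|[|n]] [|[|k]] x Hnk; simpl; try tauto; try (intros; eapply Hd; eauto); lia. }
  specialize (Hadd (pair_seq A B) (borel_pair_seq A B HA HB) Hdisj).
  rewrite pair_seq_union in Hadd.
  apply (uniqueness_sum _ _ _ Hadd).
  assert (Hs : forall k, sum_f_R0 (fun n => mu (pair_seq A B n)) (S k) = mu A + mu B).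
  { induction k as [|k IH]; [simpl; ring|]. rewrite tech5, IH. simpl. rewrite mu_empty. ring. }
  intros eps Heps. exists 1%nat. intros [|n] Hn; [lia|].
  rewrite Hs. unfold R_dist. rewrite Rminus_diag, Rabs_R0. lra.
Qed.

Lemma mu_mono (A B : R -> Prop) : borel A -> borel B -> (forall x, A x -> B x) -> mu A <= mu B.
Proof.
  intros HA HB Hsub.
  assert (E : B = (fun x => A x \/ (B x /\ ~ A x))).
  { apply set_ext. intros x. split; [|intros [H|[H _]]; auto].
    intros H. destruct (classic (A x)); tauto. }
  assert (HBA : borel (fun x => B x /\ ~ A x)) by (apply borel_inter; auto using borel_compl).
  rewrite E, mu_union_disjoint; auto.
  - pose proof (mu_ge0 _ HBA). lra.
  - intros x H [_ H']. tauto.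
Qed.

Lemma mu_le1 (A : R -> Prop) : borel A -> mu A <= 1.
Proof. intros HA. rewrite <- mu_full. apply mu_mono; auto using borel_full. Qed.

Lemma mu_lt_add_ge (c : R) : mu (fun x => x < c) + mu (fun x => c <= x) = 1.
Proof.
  rewrite <- mu_union_disjoint; [| apply borel_lt | apply borel_ge | intros; lra].
  rewrite <- mu_full. f_equal. apply set_ext. intros x. split; [tauto|].
  intros _. destruct (Rlt_le_dec x c); tauto.
Qed.

Definition unit_cell (n : nat) : R -> Prop :=
  match n with 0 => fun x => x < 0 | S k => fun x => INR k <= x < INR k + 1 end.

Lemma mu_unit_cells_sum (n : nat) :
  sum_f_R0 (fun k => mu (unit_cell k)) n = mu (fun x => x < INR n).
Proof.
  induction n as [|n IH]; [reflexivity|].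
  rewrite tech5, IH. simpl unit_cell.
  rewrite <- mu_union_disjoint.
  - f_equal. apply set_ext. intros x. rewrite S_INR.
    split; [intros [Hx|Hx]; lra|]. intros Hx. destruct (Rlt_le_dec x (INR n)); [left|right]; lra.
  - apply borel_lt.
  - apply borel_inter; [apply borel_ge|apply borel_lt].
  - intros x; lra.
Qed.

Lemma mu_right_ray_small (eps c : R) : 0 < eps -> exists M, c <= M /\ mu (fun x => M < x) < eps.
Proof.
  intros Heps. pose proof mu_prob as [_ [_ Hadd]].
  assert (Hcell : forall n, borel (unit_cell n)).
  { intros [|n]; simpl; [apply borel_lt|apply borel_inter; [apply borel_ge|apply borel_lt]]. }
  assert (Hdisj : forall n k x, n <> k -> unit_cell n x -> unit_cell k x -> False).
  { intros [|n] [|k] x Hnk; simpl; intros H1 H2;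
      [lia | pose proof (pos_INR k); lra | pose proof (pos_INR n); lra | ].
    destruct (Nat.lt_total n k) as [Hl|[He|Hl]]; [| lia |].
    - assert (INR (S n) <= INR k) as H by (apply le_INR; lia). rewrite S_INR in H. lra.
    - assert (INR (S k) <= INR n) as H by (apply le_INR; lia). rewrite S_INR in H. lra. }
  specialize (Hadd unit_cell Hcell Hdisj).
  assert (Hcover : (fun x => exists n, unit_cell n x) = (fun _ => True)).
  { apply set_ext. intros x. split; [tauto|]. intros _.
    destruct (Rlt_le_dec x 0) as [H|H]; [exists 0%nat; exact H|].
    destruct (nat_big x) as [m Hm]. destruct (floor_ex m x) as [k Hk]; [lra|].
    exists (S k). exact Hk. }
  rewrite Hcover, mu_full in Hadd.
  destruct (Hadd eps Heps) as [N HN]. specialize (HN N (le_n N)).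
  rewrite mu_unit_cells_sum in HN. unfold R_dist in HN. apply Rabs_def2 in HN.
  pose proof (mu_lt_add_ge (INR N)) as Hsplit.
  exists (Rmax c (INR N)). split; [apply Rmax_l|].
  apply Rle_lt_trans with (mu (fun x => INR N <= x)); [|lra].
  apply mu_mono; [apply borel_gt|apply borel_ge|].
  intros x Hx. pose proof (Rmax_r c (INR N)). lra.
Qed.

Lemma mu_ray_split (c M : R) : c <= M ->
  mu (fun x => c <= x) = mu (fun x => c <= x <= M) + mu (fun x => M < x).
Proof.
  intros HcM. rewrite <- mu_union_disjoint.
  - f_equal. apply set_ext. intros x. split; [|intros [Hx|Hx]; lra].
    intros H. destruct (Rle_dec x M); [left|right]; lra.
  - apply borel_closed_interval.
  - apply borel_gt.
  - intros x; lra.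
Qed.

End ProbabilityMeasure.

Lemma mink_half_interval (a1 b1 a2 b2 : R) : a1 <= b1 -> a2 <= b2 ->
  mink (/2) (fun x => a1 <= x <= b1) (fun x => a2 <= x <= b2) =
  (fun z => (a1 + a2) / 2 <= z <= (b1 + b2) / 2).
Proof.
  intros H1 H2. apply set_ext. intros z. unfold mink. split.
  - intros [x [y [Hx [Hy Hz]]]]. rewrite Hz. lra.
  - intros Hz. set (x := a1 + Rmin (2 * (z - (a1 + a2) / 2)) (b1 - a1)).
    exists x, (2 * z - x). unfold x, Rmin. destruct Rle_dec; repeat split; lra.
Qed.

Lemma rpow_half (u : R) : 0 <= u -> rpow u (/2) = sqrt u.
Proof.
  intros Hu. unfold rpow. destruct (Rlt_dec 0 u).
  - apply Rpower_sqrt; auto.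
  - replace u with 0 by lra. rewrite sqrt_0. destruct (Req_EM_T (/2) 0); [lra|reflexivity].
Qed.

Section SymmetricLogConcave.
Variable mu : (R -> Prop) -> R.
Hypothesis mu_prob : is_prob_measure mu.
Hypothesis mu_lc : log_concave mu.
Hypothesis mu_sym : symmetric mu.

Definition upper_tail (c : R) : R := mu (fun x => c <= x).

Lemma upper_tail_ge0 (c : R) : 0 <= upper_tail c.
Proof. apply (mu_ge0 mu mu_prob), borel_ge. Qed.

Lemma upper_tail_le1 (c : R) : upper_tail c <= 1.
Proof. apply (mu_le1 mu mu_prob), borel_ge. Qed.

Lemma upper_tail_antimono (c c' : R) : c <= c' -> upper_tail c' <= upper_tail c.
Proof. intros H. apply (mu_mono mu mu_prob); [apply borel_ge|apply borel_ge|intros; lra]. Qed.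

Lemma mu_interval_midpoint (a1 b1 a2 b2 : R) : a1 <= b1 -> a2 <= b2 ->
  mu (fun x => a1 <= x <= b1) * mu (fun x => a2 <= x <= b2) <=
  mu (fun x => (a1 + a2) / 2 <= x <= (b1 + b2) / 2) ^ 2.
Proof.
  intros H1 H2.
  pose proof (mu_lc _ _ (/2) (compact_P3 a1 b1) (compact_P3 a2 b2)) as L.
  rewrite mink_half_interval in L by auto.
  replace (1 - /2) with (/2) in L by lra.
  pose proof (mu_ge0 mu mu_prob _ (borel_closed_interval a1 b1)) as P1.
  pose proof (mu_ge0 mu mu_prob _ (borel_closed_interval a2 b2)) as P2.
  rewrite !rpow_half, <- sqrt_mult in L by auto.
  assert (Hx : exists x, a1 <= x <= b1) by (exists a1; lra).
  assert (Hy : exists y, a2 <= y <= b2) by (exists a2; lra).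
  specialize (L Hx Hy ltac:(lra)).
  set (m := mu (fun x => (a1 + a2) / 2 <= x <= (b1 + b2) / 2)) in *.
  set (P := mu (fun x => a1 <= x <= b1) * mu (fun x => a2 <= x <= b2)) in *.
  assert (HP : 0 <= P) by (unfold P; nra).
  rewrite <- (sqrt_sqrt P HP). pose proof (sqrt_pos P). simpl. nra.
Qed.

Lemma upper_tail_midpoint (x : R) : 0 <= x ->
  upper_tail 0 * upper_tail (2 * x) <= upper_tail x ^ 2.
Proof.
  intros Hx.
  set (A := upper_tail 0). set (B := upper_tail (2 * x)). set (C := upper_tail x).
  assert (HBA : B <= A) by (apply upper_tail_antimono; lra).
  pose proof (upper_tail_ge0 (2 * x)) as HB0. pose proof (upper_tail_le1 0) as HA1.
  pose proof (upper_tail_ge0 x) as HC0. fold A B C in HB0, HA1, HC0.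
  destruct (Req_dec B 0) as [HB|HB]; [rewrite HB; nra|].
  apply Rnot_lt_le. intros Hlt.
  (* Truncate both rays at a level M whose right tail costs less than the gap A B - C^2. *)
  set (e := Rmin B ((A * B - C ^ 2) / 4)).
  assert (He : 0 < e) by (unfold e; apply Rmin_glb_lt; lra).
  assert (HeB : e <= B) by apply Rmin_l.
  assert (HeC : e <= (A * B - C ^ 2) / 4) by apply Rmin_r.
  destruct (mu_right_ray_small mu mu_prob e (2 * x) He) as [M [HM Hsmall]].
  pose proof (mu_ray_split mu mu_prob 0 M ltac:(lra)) as E0.
  pose proof (mu_ray_split mu mu_prob (2 * x) M ltac:(lra)) as E2.
  fold (upper_tail 0) A in E0. fold (upper_tail (2 * x)) B in E2.
  pose proof (mu_interval_midpoint 0 M (2 * x) M ltac:(lra) ltac:(lra)) as L.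
  replace (fun z => (0 + 2 * x) / 2 <= z <= (M + M) / 2) with (fun z => x <= z <= M) in L
    by (apply set_ext; intros z; lra).
  assert (Hmid : mu (fun z => x <= z <= M) <= C).
  { apply (mu_mono mu mu_prob); [apply borel_closed_interval|apply borel_ge|intros; lra]. }
  pose proof (mu_ge0 mu mu_prob _ (borel_closed_interval x M)).
  pose proof (mu_ge0 mu mu_prob _ (borel_gt M)).
  assert (Hprod : (A - e) * (B - e) <=
      mu (fun z => 0 <= z <= M) * mu (fun z => 2 * x <= z <= M)) by (apply Rmult_le_compat; lra).
  nra.
Qed.

Lemma mu_le_neg (c : R) : mu (fun x => x <= - c) = upper_tail c.
Proof.
  unfold upper_tail. rewrite <- (mu_sym _ (borel_ge c)).
  f_equal. apply set_ext. intros y. lra.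
Qed.

Lemma upper_tail0_ge_half : / 2 <= upper_tail 0.
Proof.
  pose proof (mu_lt_add_ge mu mu_prob 0) as Hsplit.
  assert (Hneg : mu (fun x => x < 0) <= mu (fun x => x <= - 0)).
  { apply (mu_mono mu mu_prob); [apply borel_lt|apply borel_le|intros; lra]. }
  rewrite mu_le_neg in Hneg. unfold upper_tail in *. lra.
Qed.

Lemma upper_tail_double (x : R) : 0 <= x -> upper_tail (2 * x) <= 2 * upper_tail x ^ 2.
Proof.
  intros Hx. pose proof (upper_tail_midpoint x Hx). pose proof upper_tail0_ge_half.
  pose proof (upper_tail_ge0 (2 * x)). nra.
Qed.

Lemma upper_tail_pow2 (s : R) (k : nat) : 0 <= s ->
  upper_tail (2 ^ k * s) <= (2 * upper_tail s) ^ k * upper_tail s.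
Proof.
  intros Hs. induction k as [|k IH]; [simpl; rewrite Rmult_1_l; lra|].
  assert (H2k : 1 <= 2 ^ k) by (apply pow_R1_Rle; lra).
  pose proof (upper_tail_double (2 ^ k * s) ltac:(nra)) as D.
  replace (2 * (2 ^ k * s)) with (2 ^ S k * s) in D by (simpl; ring).
  assert (Hk : upper_tail (2 ^ k * s) <= upper_tail s) by (apply upper_tail_antimono; nra).
  pose proof (upper_tail_ge0 (2 ^ k * s)). pose proof (upper_tail_ge0 s).
  assert (0 <= (2 * upper_tail s) ^ k) by (apply pow_le; lra).
  set (X := (2 * upper_tail s) ^ k * upper_tail s) in *.
  assert (upper_tail (2 ^ k * s) ^ 2 <= upper_tail s * X).
  { apply Rle_trans with (upper_tail (2 ^ k * s) * X); simpl; [|apply Rmult_le_compat_r]; nra. }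
  unfold X in *. simpl in D |- *. lra.
Qed.

Lemma mu_abs_ge (c : R) : 0 < c -> mu (fun x => c <= Rabs x) = 2 * upper_tail c.
Proof.
  intros Hc.
  replace (fun x => c <= Rabs x) with (fun x => c <= x \/ x <= - c)
    by (apply set_ext; intros y; unfold Rabs; destruct Rcase_abs; split; intros; lra).
  rewrite (mu_union_disjoint mu mu_prob _ _ (borel_ge c) (borel_le (- c))) by (intros; lra).
  rewrite mu_le_neg. unfold upper_tail. ring.
Qed.

Lemma mu_abs_ge_pow2 (s : R) (k : nat) : 0 < s ->
  mu (fun x => 2 ^ k * s <= Rabs x) <= (2 * upper_tail s) ^ S k.
Proof.
  intros Hs. assert (0 < 2 ^ k) by (apply pow_lt; lra).
  rewrite mu_abs_ge by nra. pose proof (upper_tail_pow2 s k ltac:(lra)). simpl. lra.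
Qed.

End SymmetricLogConcave.

Lemma adapted_couple_ext (g h : R -> R) (a b : R) (l lf : list R) :
  adapted_couple g a b l lf -> a <= b -> (forall x, a < x < b -> g x = h x) ->
  adapted_couple h a b l lf.
Proof.
  intros [Hord [H0 [Hl [Hlen Hconst]]]] Hab E.
  repeat split; try assumption.
  intros i Hi x Hx. rewrite <- E; [apply (Hconst i Hi x Hx)|].
  unfold Rmin, Rmax, open_interval in *. destruct (Rle_dec a b); [|lra].
  destruct (RList_P6 l) as [Hsorted _]. specialize (Hsorted Hord).
  assert (pos_Rl l 0 <= pos_Rl l i) by (apply Hsorted; lia).
  assert (pos_Rl l (S i) <= pos_Rl l (pred (length l))) by (apply Hsorted; lia).
  lra.
Qed.

Definition IsStepFun_ext (g h : R -> R) (a b : R) (Hab : a <= b)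
  (E : forall x, a < x < b -> g x = h x) (pr : IsStepFun g a b) : IsStepFun h a b :=
  match pr with existT _ l (existT _ lf H) =>
    existT _ l (existT _ lf (adapted_couple_ext g h a b l lf H Hab E)) end.

Lemma RiemannInt_SF_ext (g h : R -> R) (a b : R) (Hab : a <= b)
  (E : forall x, a < x < b -> g x = h x) (pr : IsStepFun g a b) :
  RiemannInt_SF (mkStepFun (IsStepFun_ext g h a b Hab E pr)) = RiemannInt_SF (mkStepFun pr).
Proof. destruct pr as [l [lf H]]. reflexivity. Qed.

Section Antitone.
Variable f : R -> R.
Hypothesis f_antitone : forall x y, x <= y -> f y <= f x.

(* On n cells of width w, take f at the left end of each cell; the error is then bounded
   by a step function whose integral telescopes to w (f a - f b). *)
Lemma antitone_step_approx (w : R) (n : nat) : forall a b : R, 0 <= w -> b = a + INR n * w ->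
  {phi : R -> R & {psi : R -> R & {prphi : IsStepFun phi a b & {prpsi : IsStepFun psi a b |
    (forall t, a <= t <= b -> Rabs (f t - phi t) <= psi t) /\
    0 <= RiemannInt_SF (mkStepFun prpsi) <= w * (f a - f b)}}}}.
Proof.
  induction n as [|n IH]; intros a b Hw Hb.
  - simpl in Hb. exists (fct_cte (f a)), (fct_cte 0), (StepFun_P4 a b (f a)), (StepFun_P4 a b 0).
    rewrite StepFun_P18. replace b with a by lra. split.
    + intros t Ht. unfold fct_cte. replace t with a by lra. rewrite Rminus_diag, Rabs_R0. lra.
    + rewrite Rminus_diag. lra.
  - set (c := a + w).
    assert (Hac : a <= c) by (unfold c; lra).
    assert (Hcb : c <= b) by (pose proof (pos_INR n); rewrite S_INR in Hb; unfold c; nra).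
    destruct (IH c b Hw) as [phi1 [psi1 [prphi1 [prpsi1 [Happrox1 Hint1]]]]].
    { rewrite S_INR in Hb; unfold c; lra. }
    set (phi := fun x => if Rle_dec x c then f a else phi1 x).
    set (psi := fun x => if Rle_dec x c then f a - f c else psi1 x).
    assert (E1 : forall x, a < x < c -> fct_cte (f a) x = phi x).
    { intros x Hx. unfold phi, fct_cte. destruct (Rle_dec x c); [reflexivity|lra]. }
    assert (E2 : forall x, c < x < b -> phi1 x = phi x).
    { intros x Hx. unfold phi. destruct (Rle_dec x c); [lra|reflexivity]. }
    assert (E3 : forall x, a < x < c -> fct_cte (f a - f c) x = psi x).
    { intros x Hx. unfold psi, fct_cte. destruct (Rle_dec x c); [reflexivity|lra]. }
    assert (E4 : forall x, c < x < b -> psi1 x = psi x).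
    { intros x Hx. unfold psi. destruct (Rle_dec x c); [lra|reflexivity]. }
    pose (q1 := IsStepFun_ext _ _ _ _ Hac E3 (StepFun_P4 a c (f a - f c))).
    pose (q2 := IsStepFun_ext _ _ _ _ Hcb E4 prpsi1).
    exists phi, psi,
      (StepFun_P46 (IsStepFun_ext _ _ _ _ Hac E1 (StepFun_P4 a c (f a)))
                   (IsStepFun_ext _ _ _ _ Hcb E2 prphi1)), (StepFun_P46 q1 q2).
    split.
    + intros t Ht. unfold phi, psi. destruct (Rle_dec t c).
      * assert (f c <= f t) by (apply f_antitone; lra).
        assert (f t <= f a) by (apply f_antitone; lra).
        rewrite Rabs_left1; lra.
      * apply Happrox1; lra.
    + rewrite <- (StepFun_P43 q1 q2). unfold q1, q2. rewrite !RiemannInt_SF_ext, StepFun_P18.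
      assert (f c <= f a) by (apply f_antitone; lra).
      assert (f b <= f c) by (apply f_antitone; lra).
      replace (c - a) with w by (unfold c; lra). nra.
Qed.

Lemma antitone_Riemann_integrable (a b : R) : a <= b -> Riemann_integrable f a b.
Proof.
  intros Hab eps.
  assert (Hfab : f b <= f a) by (apply f_antitone; lra).
  destruct (nat_big ((b - a) * (f a - f b) / eps)) as [n0 Hn0].
  set (n := S n0).
  assert (Hn : INR n0 < INR n) by (unfold n; rewrite S_INR; lra).
  assert (Hn0pos : 0 < INR n) by (pose proof (pos_INR n0); lra).
  set (w := (b - a) / INR n).
  assert (Hw : 0 <= w) by (unfold w; apply Rmult_le_pos; [lra|left; apply Rinv_0_lt_compat; lra]).
  destruct (antitone_step_approx w n a b Hw) as [phi [psi [prphi [prpsi [Happrox Hint]]]]].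
  { unfold w. field. lra. }
  exists (mkStepFun prphi), (mkStepFun prpsi). split.
  - intros t Ht. unfold Rmin, Rmax in Ht. destruct (Rle_dec a b); [apply Happrox; exact Ht|lra].
  - rewrite Rabs_pos_eq by lra. apply Rle_lt_trans with (w * (f a - f b)); [lra|].
    pose proof (cond_pos eps).
    apply Rmult_lt_reg_r with (INR n); [lra|].
    replace (w * (f a - f b) * INR n) with ((b - a) * (f a - f b)) by (unfold w; field; lra).
    apply (Rmult_lt_compat_r eps) in Hn0; [|lra].
    replace ((b - a) * (f a - f b) / eps * eps) with ((b - a) * (f a - f b)) in Hn0
      by (field; lra).
    nra.
Qed.

End Antitone.

Lemma RiemannInt_le_const (f : R -> R) (a b c : R) (pr : Riemann_integrable f a b) :
  a <= b -> (forall t, a < t < b -> f t <= c) -> RiemannInt pr <= c * (b - a).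
Proof.
  intros Hab Hf. rewrite <- (RiemannInt_P15 (RiemannInt_P14 a b c)).
  apply RiemannInt_P19; auto.
Qed.

Lemma RiemannInt_ge_const (f : R -> R) (a b c : R) (pr : Riemann_integrable f a b) :
  a <= b -> (forall t, a < t < b -> c <= f t) -> c * (b - a) <= RiemannInt pr.
Proof.
  intros Hab Hf. rewrite <- (RiemannInt_P15 (RiemannInt_P14 a b c)).
  apply RiemannInt_P19; auto.
Qed.

Lemma Rpower_gt0 (x y : R) : 0 < Rpower x y.
Proof. apply exp_pos. Qed.

Lemma powp_ge0 (u p : R) : 0 <= powp u p.
Proof. unfold powp. destruct (Rlt_dec 0 u); [left; apply Rpower_gt0|lra]. Qed.

Lemma powp_Rpower (u p : R) : 0 < u -> powp u p = Rpower u p.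
Proof. intros H. unfold powp. destruct (Rlt_dec 0 u); [reflexivity|lra]. Qed.

Lemma powp_le (p u u' : R) : 0 < p -> 0 <= u <= u' -> powp u p <= powp u' p.
Proof.
  intros Hp Hu. unfold powp. destruct (Rlt_dec 0 u), (Rlt_dec 0 u').
  - apply Rle_Rpower_l; lra.
  - lra.
  - left. apply Rpower_gt0.
  - lra.
Qed.

Lemma Rpower_pow2_mul (n : nat) (s p : R) : 0 < s ->
  Rpower (2 ^ n * s) p = Rpower 2 p ^ n * Rpower s p.
Proof.
  intros Hs. rewrite <- Rpower_mult_distr by (try apply pow_lt; lra).
  rewrite <- (Rpower_pow n (Rpower 2 p)) by apply Rpower_gt0.
  rewrite <- (Rpower_pow n 2) by lra. rewrite !Rpower_mult, (Rmult_comm p). reflexivity.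
Qed.

Lemma Rpower_ge_sqr (x p : R) : 1 <= x -> 2 <= p -> x ^ 2 <= Rpower x p.
Proof. intros Hx Hp. rewrite <- Rpower_pow by lra. apply Rle_Rpower; simpl; lra. Qed.

Lemma Rpower6_ge (p : R) : 2 <= p -> 4 * Rpower 2 p <= Rpower 6 p.
Proof.
  intros Hp. replace 6 with (3 * 2) by ring. rewrite <- Rpower_mult_distr by lra.
  pose proof (Rpower_ge_sqr 3 p ltac:(lra) Hp). pose proof (Rpower_gt0 2 p). simpl in *. nra.
Qed.

Section LayerCake.
Variable mu : (R -> Prop) -> R.
Hypothesis mu_prob : is_prob_measure mu.
Variable G : R -> R.
Hypothesis G_mono : forall u u', 0 <= u <= u' -> G u <= G u'.

Lemma abs_level_antitone (t t' : R) : t <= t' ->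
  mu (fun y => t' < G (Rabs y)) <= mu (fun y => t < G (Rabs y)).
Proof.
  intros Htt'. apply (mu_mono mu mu_prob); try (apply borel_abs_level; exact G_mono).
  intros y Hy. lra.
Qed.

Lemma abs_level_integrable (T : R) : 0 <= T ->
  Riemann_integrable (fun t => mu (fun y => t < G (Rabs y))) 0 T.
Proof. apply antitone_Riemann_integrable. exact abs_level_antitone. Qed.

End LayerCake.

Section Moments.
Variable mu : (R -> Prop) -> R.
Variable p : R.
Hypothesis mu_prob : is_prob_measure mu.
Hypothesis mu_lc : log_concave mu.
Hypothesis mu_sym : symmetric mu.
Hypothesis p_ge2 : 2 <= p.

Let abs_pow_mono : forall u u', 0 <= u <= u' -> powp u p <= powp u' p.
Proof. intros u u'. apply powp_le. lra. Qed.

Lemma truncated_moment_ge_tail (V s : R)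
  (pr : Riemann_integrable (fun t => mu (fun y => t < powp (Rmin (Rabs y) V) p)) 0 (Rpower s p)) :
  0 < s <= V -> upper_tail mu s * Rpower s p <= RiemannInt pr.
Proof.
  intros Hs. replace (upper_tail mu s * Rpower s p) with (upper_tail mu s * (Rpower s p - 0))
    by ring.
  apply RiemannInt_ge_const; [left; apply Rpower_gt0|]. intros t Ht.
  apply (mu_mono mu mu_prob); [apply borel_ge| |].
  - apply (borel_abs_level (fun u => powp (Rmin u V) p)). intros u u' Hu.
    apply abs_pow_mono. split; [apply Rmin_glb; lra|apply Rle_min_compat_r; lra].
  - intros y Hy. apply Rlt_le_trans with (Rpower s p); [lra|].
    rewrite <- powp_Rpower by lra. apply abs_pow_mono.
    unfold Rmin, Rabs. destruct Rle_dec, Rcase_abs; lra.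
Qed.

Lemma abs_level_le_tail_pow (s t : R) (n : nat) : 0 < s ->
  Rpower 2 p ^ n * Rpower s p <= t ->
  mu (fun y => t < powp (Rabs y) p) <= (2 * upper_tail mu s) ^ S n.
Proof.
  intros Hs Ht. assert (0 < 2 ^ n) by (apply pow_lt; lra).
  apply Rle_trans with (mu (fun y => 2 ^ n * s <= Rabs y)).
  2: { apply mu_abs_ge_pow2; assumption. }
  apply (mu_mono mu mu_prob).
  - apply (borel_abs_level (fun u => powp u p)). exact abs_pow_mono.
  - apply (borel_abs_upclosed (fun u => 2 ^ n * s <= u)). intros; lra.
  - intros y Hy. apply Rnot_lt_le. intros Hlt.
    assert (Hle : powp (Rabs y) p <= Rpower (2 ^ n * s) p).
    { rewrite <- powp_Rpower by nra. apply abs_pow_mono. split; [apply Rabs_pos|lra]. }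
    rewrite Rpower_pow2_mul in Hle by lra. lra.
Qed.

Section SmallTail.
Variable s : R.
Hypothesis s_pos : 0 < s.
Hypothesis tail_small : 2 * upper_tail mu s * Rpower 2 p <= / 2.

Lemma abs_moment_partial_le (n : nat) (T : R)
  (pr : Riemann_integrable (fun t => mu (fun y => t < powp (Rabs y) p)) 0 T) :
  0 <= T -> T <= Rpower 2 p ^ n * Rpower s p ->
  RiemannInt pr <= 2 * Rpower s p - Rpower s p * (/ 2) ^ n.
Proof.
  set (A := Rpower 2 p). set (Sp := Rpower s p).
  assert (HS : 0 < Sp) by apply Rpower_gt0.
  assert (HA : 0 < A) by apply Rpower_gt0.
  pose proof (upper_tail_ge0 mu mu_prob s) as Hh.
  revert T pr. induction n as [|n IH]; intros T pr HT HTn.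
  - simpl in HTn |- *. rewrite Rmult_1_l in HTn.
    apply Rle_trans with (1 * (T - 0)); [|lra].
    apply RiemannInt_le_const; [exact HT|]. intros t _.
    apply (mu_le1 mu mu_prob), (borel_abs_level (fun u => powp u p)), abs_pow_mono.
  - set (tn := A ^ n * Sp).
    assert (Htn : 0 <= tn) by (unfold tn; pose proof (pow_le A n ltac:(lra)); nra).
    assert (Hhalf : 0 < (/ 2) ^ n) by (apply pow_lt; lra).
    simpl ((/ 2) ^ S n).
    destruct (Rle_dec T tn) as [HTle|HTgt].
    { specialize (IH T pr HT HTle). nra. }
    assert (Hsplit : 0 <= tn <= T) by lra.
    rewrite <- (RiemannInt_P26 (RiemannInt_P22 pr Hsplit) (RiemannInt_P23 pr Hsplit) pr).
    specialize (IH tn (RiemannInt_P22 pr Hsplit) Htn (Rle_refl _)).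
    assert (Hupper : RiemannInt (RiemannInt_P23 pr Hsplit) <=
                     (2 * upper_tail mu s) ^ S n * (T - tn)).
    { apply RiemannInt_le_const; [lra|]. intros t Ht.
      apply abs_level_le_tail_pow; [exact s_pos|fold A Sp tn; lra]. }
    assert (Hgeo : (2 * upper_tail mu s) ^ S n * (T - tn) <= Sp * (/ 2) ^ S n).
    { apply Rle_trans with ((2 * upper_tail mu s) ^ S n * (A ^ S n * Sp)).
      { apply Rmult_le_compat_l; [apply pow_le; lra|]. unfold tn in *. lra. }
      rewrite <- Rmult_assoc, <- Rpow_mult_distr, Rmult_comm.
      apply Rmult_le_compat_l; [lra|]. apply pow_incr. fold A in tail_small. nra. }
    simpl in Hupper, Hgeo. lra.
Qed.

Lemma abs_moment_le (T : R)
  (pr : Riemann_integrable (fun t => mu (fun y => t < powp (Rabs y) p)) 0 T) :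
  0 <= T -> RiemannInt pr <= 2 * Rpower s p.
Proof.
  intros HT. pose proof (Rpower_gt0 s p) as HS.
  destruct (nat_big (T / Rpower s p)) as [n Hn].
  assert (HTn : T <= Rpower 2 p ^ n * Rpower s p).
  { assert (INR n <= Rpower 2 p ^ n).
    { apply Rle_trans with (2 ^ n); [apply INR_le_pow2|].
      apply pow_incr. pose proof (Rpower_ge_sqr 2 p ltac:(lra) p_ge2). simpl in *. lra. }
    apply (Rmult_lt_compat_r (Rpower s p)) in Hn; [|exact HS].
    unfold Rdiv in Hn. rewrite Rmult_assoc, Rinv_l, Rmult_1_r in Hn by lra. nra. }
  pose proof (abs_moment_partial_le n T pr HT HTn).
  assert (0 < (/ 2) ^ n) by (apply pow_lt; lra). nra.
Qed.

End SmallTail.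

End Moments.

Theorem lemma3p2 (mu : (R -> Prop) -> R) (p V : R) :
  is_prob_measure mu -> log_concave mu -> symmetric mu ->
  2 <= p -> 0 < V ->
  expect_ge mu (fun y => powp (Rabs y) p) (powp V p) ->
  expect_ge mu (fun y => powp (Rmin (Rabs y) V) p) (powp (V / 12) p).
Proof.
  intros Hm Hlc Hsym Hp HV Hmoment c' Hc'.
  set (s := V / 2). set (h := upper_tail mu s).
  assert (Hs : 0 < s) by (unfold s; lra).
  assert (HsV : Rpower s p = powp (V / 12) p * Rpower 6 p).
  { rewrite powp_Rpower, Rpower_mult_distr by lra. unfold s. f_equal. field. }
  assert (HVs : powp V p = Rpower 2 p * Rpower s p).
  { rewrite powp_Rpower, Rpower_mult_distr by lra. unfold s. f_equal. field. }
  pose proof (Rpower_gt0 s p). pose proof (Rpower_gt0 6 p). pose proof (powp_ge0 (V / 12) p).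
  assert (Hh : 0 <= h) by apply (upper_tail_ge0 mu Hm).
  destruct (Rle_dec 1 (h * Rpower 6 p)) as [Hbig|Hsmall].
  - assert (Htrunc : forall u u', 0 <= u <= u' -> powp (Rmin u V) p <= powp (Rmin u' V) p).
    { intros u u' Hu. apply powp_le; [lra|].
      split; [apply Rmin_glb; lra|apply Rle_min_compat_r; lra]. }
    exists (Rpower s p), (abs_level_integrable mu Hm _ Htrunc _ (Rlt_le _ _ (Rpower_gt0 s p))).
    split; [lra|].
    eapply Rlt_le_trans; [|apply (truncated_moment_ge_tail mu p Hm); unfold s; lra].
    fold h. rewrite HsV. nra.
  - exfalso.
    assert (Htail : 2 * h * Rpower 2 p <= / 2) by (pose proof (Rpower6_ge p Hp); nra).
    destruct (Hmoment (3 / 4 * powp V p)) as [T [pr [HT Hlt]]].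
    { pose proof (Rpower_gt0 2 p). nra. }
    pose proof (abs_moment_le mu p Hm Hlc Hsym Hp s Hs Htail T pr HT).
    pose proof (Rpower_ge_sqr 2 p ltac:(lra) Hp). simpl in *. nra.
Qed.
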